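(* Let $\mathbb{E}^\ast_n=\{(a,b)\in\mathbb{N}^2:1\le a+b\le n\}$ and define $\vec v:\mathbb{E}^\ast_n\to W$ by \[\vec v(a,b)=(\underbrace{1,\dots,1}_{a},\underbrace{0,\dots,0}_{n-a-b},\underbrace{-1,\dots,-1}_{b}).\] (a) The map $(a,b)\mapsto \mathbb{R}_{\ge0}\vec v(a,b)$ is a bijection from $\mathbb{E}^\ast_n$ onto the set of extreme rays of $I(\mathfrak{gl}_n,V\oplus\bigwedge^2)$. (b) For $S\subseteq[n]$, the extreme rays lying in the chamber $C(S)$ are exactly those generated by $\vec v(\pi_\ell^S,\ell-\pi_\ell^S)$ for $\ell=1,\dots,n$, where $\pi_\ell^S=|S\cap[n-\ell+1,\infty)|$.
   Context: Identify the diagonal Cartan subalgebra of $\mathfrak{gl}_n$ with $\mathbb{R}^n$ with coordinates $x_1,\dots,x_n$. Let $W=\{x_1\ge\cdots\ge x_n\}$ and $W^0=\{x_1>\cdots>x_n\}$. For $1\le i\le j\le n$ let $\lambda_{i,j}^\perp$ be the hyperplane $x_i+x_j=0$ (for $i=j$: $x_i=0$); $I(\mathfrak{gl}_n,V\oplus\bigwedge^2)$ is the arrangement of these hyperplanes restricted to $W$. Chambers are the closures of the connected components of $W^0\setminus\bigcup\lambda_{i,j}^\perp$; a face is a chamber or the intersection of a chamber with a supporting hyperplane; an extreme ray is a face that is a half-line. For $S=\{a_1>\cdots>a_k\}\subseteq[n]$, $C(S)$ is the subset of $W$ on which, for $1\le i\le j\le n$, $x_i+x_j\ge0$ if $i\le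 k$ and $j\le i+a_i-1$, and $x_i+x_j\le0$ otherwise (row $i$ of the right-justified sign tableau of the $x_i+x_j$ has $a_i$ plus signs for $i\le k$, none for $i>k$); these are exactly the chambers. *)

(* Points of R^n are row vectors 'rV[R]_n; the paper's
   coordinate x_(i+1) is x 0 i (0-based index i : 'I_n).
   Subsets of R^n are predicates 'rV[R]_n -> Prop. *)
From HB Require Import structures.
From mathcomp Require Import all_boot all_order all_algebra.
Set Implicit Arguments. Unset Strict Implicit. Unset Printing Implicit Defensive.
Import Order.TTheory GRing.Theory Num.Theory.
Local Open Scope ring_scope.

Section Defs.
Variables (R : realFieldType) (n : nat).

Definition pt := 'rV[R]_n.
Definition ptset := pt -> Prop.

Definition dotv (l x : pt) : R := \sum_(i < n) l 0 i * x 0 i.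

Definition Wset : ptset := fun x => forall i j : 'I_n, (i <= j)%N -> x 0 j <= x 0 i.

(* S is a subset of [n] = {1,...,n}; the element i : 'I_n stands for i+1.
   Sdesc S = [a_1; ...; a_k] with a_1 > ... > a_k the elements of S. *)
Definition Sdesc (S : {set 'I_n}) : seq nat :=
  sort geq [seq (nat_of_ord s).+1 | s <- enum S].

Definition Cset (S : {set 'I_n}) : ptset := fun x =>
  Wset x /\
  forall i j : 'I_n, (i <= j)%N ->
    if ((i < #|S|)%N && (j < i + nth 0%N (Sdesc S) i)%N)
    then 0 <= x 0 i + x 0 j
    else x 0 i + x 0 j <= 0.

(* The chambers of I(gl_n, V + wedge^2) are exactly the C(S) (given in the context). *)
Definition chamber (C : ptset) : Prop := exists S : {set 'I_n}, C = Cset S.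

Definition face (C F : ptset) : Prop :=
  F = C \/
  exists (l : pt) (c : R), l != 0 /\
    (forall x, C x -> c <= dotv l x) /\
    (exists x, C x /\ dotv l x = c) /\
    F = (fun x => C x /\ dotv l x = c).

Definition half_line (F : ptset) : Prop :=
  exists p v : pt, v != 0 /\ F = (fun x => exists t : R, 0 <= t /\ x = p + t *: v).

Definition extreme_ray (F : ptset) : Prop :=
  (exists C, chamber C /\ face C F) /\ half_line F.

Definition ray (v : pt) : ptset := fun x => exists t : R, 0 <= t /\ x = t *: v.

Definition vab (a b : nat) : pt :=
  \row_(i < n) (if (i < a)%N then 1 else if (n - b <= i)%N then -1 else 0).

(* pi_l^S = |S cap [n-l+1, oo)| ; with 0-based s standing for s+1 this is s >= n - l *)
Definition piS (S : {set 'I_n}) (l : nat) : nat := #|[set s in S | (n - l <= s)%N]|.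

End Defs.

From mathcomp Require Import all_boot all_order all_algebra.
From mathcomp Require Import zify lra.
From Stdlib Require Import FunctionalExtensionality PropExtensionality.
Import Order.TTheory GRing.Theory Num.Theory.
Set Implicit Arguments. Unset Strict Implicit. Unset Printing Implicit Defensive.

(* Each chamber C(S) is a simplicial cone: the n vectors
   g_m = v(pi_(m+1), m+1 - pi_(m+1)), m < n, lie in C(S), and there are linear
   functionals f_m, dual to them, that are nonnegative on C(S), so every x in C(S)
   equals sum_m f_m(x) g_m.  In a simplicial cone the faces that are half-lines are
   exactly the rays through the generators.  A vector v(a,b) lying in C(S) has dual
   coordinates in {0,1} summing to at most 1, hence is one of the generators; and
   every v(a,b) is a generator of C({n-a+1,...,n}). *)

Lemma count_gt_nth (s : seq nat) i : sorted gtn s -> i < size s ->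
  count (fun a => nth 0 s i < a) s = i.
Proof.
elim: s i => [|h t IH] i //= sorted_ht lt_i.
have gtn_trans : transitive gtn by move=> x y z yx zy; exact: ltn_trans zy yx.
have lt_h : all (fun a => a < h) t by exact: order_path_min gtn_trans sorted_ht.
case: i lt_i => [|j] lt_j /=.
- rewrite ltnn add0n; apply/eqP; rewrite -leqn0 leqNgt -has_count.
  by apply/hasP => -[a /(allP lt_h) ah]; rewrite ltnNge ltnW.
- by rewrite (allP lt_h _ (mem_nth 0 _)) // IH // (path_sorted sorted_ht).
Qed.

Section SetCounting.
Variables (n : nat) (S : {set 'I_n}).

Definition memS (u : nat) : bool := [exists s in S, val s == u].

Definition card_ge (t : nat) : nat := \sum_(s in S) (t <= s).

Lemma piS_card_ge l : piS S l = card_ge (n - l).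
Proof.
rewrite /piS /card_ge -sum1_card big_mkcond [RHS]big_mkcond /=.
by apply: eq_bigr => i _; rewrite !inE; case: (i \in S); case: (_ <= i).
Qed.

Lemma card_geS t : card_ge t = memS t + card_ge t.+1.
Proof.
rewrite /card_ge.
have -> : \sum_(s in S) (t <= s) = \sum_(s in S) ((val s == t) + (t < s)).
  by apply: eq_bigr => i _; case: (ltngtP t i).
rewrite big_split /=; congr (_ + _).
rewrite /memS; case: existsP => [[s0 /andP [s0S /eqP s0t]]|nomem].
- rewrite (bigD1 s0) //= s0t eqxx big1 // => i /andP [_ is0].
  by apply/eqP; rewrite eqb0 -s0t; apply: contra is0 => /eqP /val_inj ->.
- rewrite big1 // => i iS; apply/eqP; rewrite eqb0; apply/negP => it.
  by apply: nomem; exists i; rewrite iS.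
Qed.

Lemma card_ge_eq0 t : n <= t -> card_ge t = 0.
Proof.
move=> le_nt; rewrite /card_ge big1 // => i _; apply/eqP.
by rewrite eqb0 -ltnNge (leq_trans (ltn_ord i)).
Qed.

Lemma card_ge0 : card_ge 0 = #|S|.
Proof. by rewrite /card_ge -sum1_card; apply: eq_bigr => i _; rewrite leq0n. Qed.

Lemma card_ge_antimono t t' : t <= t' -> card_ge t' <= card_ge t.
Proof.
move/subnK => <-; elim: (t' - t) => [|d IH] //=.
by rewrite addSn (leq_trans _ IH) // (card_geS (d + t)) leq_addl.
Qed.

Lemma card_ge_lipschitz t t' : t <= t' -> card_ge t <= card_ge t' + (t' - t).
Proof.
move/subnK => <-; rewrite addnK; elim: (t' - t) => [|d IH]; first by rewrite addn0.
by rewrite (leq_trans IH) // addSn (card_geS (d + t)); case: memS => /=; lia.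
Qed.

Lemma card_ge_le t : card_ge t <= n - t.
Proof.
case: (leqP t n) => [le_tn|lt_nt]; last by rewrite card_ge_eq0 // ltnW.
by have := card_ge_lipschitz le_tn; rewrite (card_ge_eq0 (leqnn n)).
Qed.

Lemma Sdesc_sorted : sorted gtn (Sdesc S).
Proof.
rewrite gtn_sorted_uniq_geq sort_uniq; apply/andP; split.
- by rewrite map_inj_uniq ?enum_uniq // => a b /= [] /val_inj.
- by apply: sort_sorted => a b; exact: leq_total.
Qed.

Lemma size_Sdesc : size (Sdesc S) = #|S|.
Proof. by rewrite size_sort size_map cardE. Qed.

Lemma count_Sdesc c : count (fun a => c.+1 < a) (Sdesc S) = card_ge c.+1.
Proof.
rewrite (permP (permEl (perm_sort _ _))) count_map -sum1_count big_enum_cond /=.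
rewrite /card_ge [RHS]big_mkcond [LHS]big_mkcond /=.
by apply: eq_bigr => i _; rewrite ltnS; case: (i \in S); case: (c < i).
Qed.

Lemma nth_Sdesc i : i < #|S| ->
  exists c, [/\ memS c, nth 0 (Sdesc S) i = c.+1 & card_ge c.+1 = i].
Proof.
rewrite -size_Sdesc => lt_i; have := mem_nth 0 lt_i; rewrite mem_sort.
case/mapP => s sS nth_s; exists s; split => //.
- by apply/existsP; exists s; rewrite -mem_enum sS eqxx.
- by rewrite -count_Sdesc -nth_s count_gt_nth // Sdesc_sorted.
Qed.

Lemma nth_Sdesc_card_ge c : memS c ->
  card_ge c.+1 < #|S| /\ nth 0 (Sdesc S) (card_ge c.+1) = c.+1.
Proof.
move=> cS.
have lt_S : card_ge c.+1 < #|S|.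
  by rewrite -card_ge0 (leq_trans _ (card_ge_antimono (leq0n c))) // (card_geS c) cS.
split=> //; have [c' [c'S -> card_c']] := nth_Sdesc lt_S; congr _.+1.
case: (ltngtP c' c) => // lt_cc'.
- by have := card_ge_antimono lt_cc'; rewrite card_c' (card_geS c) cS /=; lia.
- by have := card_ge_antimono lt_cc'; rewrite -card_c' (card_geS c') c'S /=; lia.
Qed.

Definition jumpS (m : nat) : bool := memS (n - m.+1).

Lemma piS_succ m : m < n -> piS S m.+1 = jumpS m + piS S m.
Proof.
by move=> lt_mn; rewrite !piS_card_ge (card_geS (n - m.+1)) -subSn.
Qed.

Lemma piS_le m : piS S m <= m.
Proof. by have := card_ge_le (n - m); rewrite piS_card_ge; lia. Qed.

Lemma piS_mono m m' : m <= m' -> piS S m <= piS S m'.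
Proof. by move=> le_mm'; rewrite !piS_card_ge card_ge_antimono //; lia. Qed.

Lemma piS_lipschitz m m' : m <= m' -> piS S m' <= piS S m + (m' - m).
Proof.
move=> le_mm'; have := @card_ge_lipschitz (n - m') (n - m).
by rewrite !piS_card_ge; lia.
Qed.

Lemma piS_n : piS S n = #|S|.
Proof. by rewrite piS_card_ge subnn card_ge0. Qed.

Lemma piS_le_card m : piS S m <= #|S|.
Proof. by rewrite piS_card_ge -card_ge0 card_ge_antimono. Qed.

Lemma jump_idx_lt m : m < n -> jumpS m -> piS S m < n.
Proof.
move=> lt_mn jm; have := piS_le_card m.+1; have := max_card S.
by rewrite piS_succ // jm card_ord; lia.
Qed.

Lemma drop_idx_lt m : m < n -> n - m.+1 + piS S m < n.
Proof. by have := piS_le m; lia. Qed.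

End SetCounting.

Lemma memS_interval n k u : memS [set s : 'I_n | (k <= s)%N] u = (u < n)%N && (k <= u)%N.
Proof.
apply/existsP/andP => [[s /andP [sS /eqP <-]]|[lt_un le_ku]].
- by rewrite inE in sS; split; first exact: ltn_ord.
- by exists (Ordinal lt_un); rewrite inE /= le_ku eqxx.
Qed.

Lemma piS_interval n a l : (a <= l <= n)%N -> piS [set s : 'I_n | (n - a <= s)%N] l = a.
Proof.
move=> al; rewrite piS_card_ge.
suff card_int d : (d <= n)%N ->
    card_ge [set s : 'I_n | (n - a <= s)%N] (n - d) = (n - maxn (n - d) (n - a))%N.
  by rewrite card_int; lia.
elim: d => [|d IH] le_dn; first by rewrite subn0 card_ge_eq0 //; lia.
rewrite card_geS memS_interval (_ : (n - d.+1).+1 = n - d)%N; last by lia.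
by rewrite IH; [case: (leqP (n - a) (n - d.+1)) => /= ?; lia | lia].
Qed.

Local Open Scope ring_scope.

Section Pairing.
Variables (R : realFieldType) (n : nat).
Implicit Types (l x : pt R n).

Lemma dotvN l x : dotv (- l) x = - dotv l x.
Proof. by rewrite /dotv -sumrN; apply: eq_bigr => i _; rewrite mxE mulNr. Qed.

Lemma dotvB l l' x : dotv (l - l') x = dotv l x - dotv l' x.
Proof.
by rewrite /dotv -sumrB; apply: eq_bigr => i _; rewrite !mxE mulrBl.
Qed.

Lemma dotv0 x : dotv 0 x = 0.
Proof. by rewrite /dotv big1 // => i _; rewrite mxE mul0r. Qed.

Lemma dotvZ l x t : dotv l (t *: x) = t * dotv l x.
Proof. by rewrite /dotv mulr_sumr; apply: eq_bigr => i _; rewrite mxE mulrCA. Qed.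

Lemma dotvr0 l : dotv l 0 = 0.
Proof. by rewrite -(scale0r 0) dotvZ mul0r. Qed.

Lemma dotv_suml (I : finType) (P : pred I) (F : I -> pt R n) x :
  dotv (\sum_(k | P k) F k) x = \sum_(k | P k) dotv (F k) x.
Proof.
by rewrite /dotv exchange_big; apply: eq_bigr => i _; rewrite summxE mulr_suml.
Qed.

Lemma dotv_sumr (I : finType) (P : pred I) (F : I -> pt R n) l :
  dotv l (\sum_(k | P k) F k) = \sum_(k | P k) dotv l (F k).
Proof.
by rewrite /dotv exchange_big; apply: eq_bigr => i _; rewrite summxE mulr_sumr.
Qed.

(* A left inverse of a square matrix is a right inverse. *)
Lemma biorthogonal_decomp (g f : 'I_n -> pt R n) :
  (forall i j, dotv (f i) (g j) = (i == j)%:R) ->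
  forall x, x = \sum_i dotv (f i) x *: g i.
Proof.
move=> fg x.
pose Fm : 'M[R]_n := \matrix_(i, j) f i 0 j.
pose Gm : 'M[R]_n := \matrix_(j, i) g i 0 j.
have FG : Fm *m Gm = 1%:M.
  apply/matrixP => i i'; rewrite !mxE -fg /dotv.
  by apply: eq_bigr => j _; rewrite !mxE.
apply/rowP => j; rewrite summxE.
have -> : x 0 j = \sum_k (Gm *m Fm) j k * x 0 k.
  rewrite (mulmx1C FG) (bigD1 j) //= big1 ?addr0 => [|k kj].
    by rewrite mxE eqxx mul1r.
  by rewrite mxE eq_sym (negbTE kj) mul0r.
under eq_bigr => k _ do rewrite mxE big_distrl.
rewrite exchange_big; apply: eq_bigr => i _.
by rewrite [RHS]mxE /dotv big_distrl; apply: eq_bigr => k _; rewrite !mxE /= -mulrA mulrC.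
Qed.

Lemma ray_half_line (v : pt R n) : v != 0 -> half_line (ray v).
Proof.
move=> v_neq0; exists 0, v; split=> //.
apply: functional_extensionality => x; apply: propositional_extensionality.
by split=> -[t [t_ge0 ->]]; exists t; rewrite ?add0r.
Qed.

Lemma ray_self (v : pt R n) : ray v v.
Proof. by exists 1; rewrite scale1r ler01. Qed.

Lemma half_line_neq0 (F : ptset R n) : half_line F -> exists2 x, F x & x != 0.
Proof.
move=> [p [v [v_neq0 ->]]].
have [->|p_neq0] := eqVneq p 0; last by exists p => //; exists 0; rewrite scale0r addr0.
by exists v; [exists 1; rewrite scale1r add0r ler01 | done].
Qed.

Lemma half_line_collinear (F : ptset R n) : half_line F -> F 0 ->
  exists2 v : pt R n, v != 0 & forall x, F x -> exists s : R, x = s *: v.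
Proof.
move=> [p [v [v_neq0 ->]]] [t0 [_ def0]]; exists v => // _ [t [_ ->]].
have -> : p = - (t0 *: v) by apply/eqP; rewrite -addr_eq0 -def0.
by exists (t - t0); rewrite scalerBl addrC.
Qed.

End Pairing.

Section SimplicialCone.
Variables (R : realFieldType) (n k : nat) (C : ptset R n) (g f : 'I_k -> pt R n).
Hypothesis C0 : C 0.
Hypothesis C_scale : forall t x, 0 <= t -> C x -> C (t *: x).
Hypothesis C_gen : forall i, C (g i).
Hypothesis coord_ge0 : forall i x, C x -> 0 <= dotv (f i) x.
Hypothesis coord_gen : forall i j, dotv (f i) (g j) = (i == j)%:R.
Hypothesis C_decomp : forall x, C x -> x = \sum_i dotv (f i) x *: g i.

Lemma gen_neq0 i : g i != 0.
Proof.
apply/eqP => gi0; have := coord_gen i i.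
by rewrite gi0 dotvr0 eqxx => /eqP; rewrite eq_sym oner_eq0.
Qed.

Lemma ray_gen_coords i :
  ray (g i) = (fun x => C x /\ forall j, j != i -> dotv (f j) x = 0).
Proof.
apply: functional_extensionality => x; apply: propositional_extensionality; split.
- case=> t [t_ge0 ->]; split; first exact: C_scale.
  by move=> j ji; rewrite dotvZ coord_gen (negbTE ji) mulr0.
- case=> Cx fx0; exists (dotv (f i) x); split; first exact: coord_ge0.
  rewrite {1}(C_decomp Cx) (bigD1 i) //= big1 ?addr0 // => j ji.
  by rewrite fx0 ?scale0r.
Qed.

(* [C] is a cone containing [0], so a supporting hyperplane must pass through [0]. *)
Lemma face_supported F : face C F ->
  exists2 l, forall x, C x -> 0 <= dotv l x & F = (fun x => C x /\ dotv l x = 0).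
Proof.
case=> [->|[l [c [_ [c_le [[x0 [Cx0 lx0]] ->]]]]]].
  exists 0 => [x _|]; first by rewrite dotv0.
  apply: functional_extensionality => x; apply: propositional_extensionality.
  by rewrite dotv0; split=> [|[]].
suff c0 : c = 0 by rewrite c0 in c_le *; exists l.
have := c_le 0 C0; have := c_le _ (C_scale (ler0n R 2) Cx0).
by rewrite dotvZ lx0 dotvr0; lra.
Qed.

Lemma supported_face_coords l x : (forall y, C y -> 0 <= dotv l y) ->
  (C x /\ dotv l x = 0) <->
  (C x /\ forall i, dotv l (g i) != 0 -> dotv (f i) x = 0).
Proof.
move=> l_ge0; split=> -[Cx lx]; split=> //; last first.
  rewrite (C_decomp Cx) dotv_sumr big1 // => i _; rewrite dotvZ.
  by have [->|/lx ->] := eqVneq (dotv l (g i)) 0; rewrite ?mulr0 ?mul0r.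
have lx_sum : \sum_j dotv (f j) x * dotv l (g j) = 0.
  by rewrite -[RHS]lx [in RHS](C_decomp Cx) dotv_sumr; apply: eq_bigr => j _; rewrite dotvZ.
move=> i lgi_neq0; apply/eqP; rewrite -(mulIr_eq0 _ (mulIf lgi_neq0)); apply/eqP.
apply: (psumr_eq0P _ lx_sum) => // j _.
by rewrite mulr_ge0 ?coord_ge0 ?l_ge0.
Qed.

Lemma face_ray_gen i : face C (ray (g i)).
Proof.
pose l := \sum_(j | j != i) f j.
have l_ge0 x : C x -> 0 <= dotv l x.
  by move=> Cx; rewrite dotv_suml sumr_ge0 // => j _; exact: coord_ge0.
have l_gen j : dotv l (g j) = (j != i)%:R.
  rewrite dotv_suml; have [->|ji] := eqVneq j i.
    by rewrite big1 // => j' j'i; rewrite coord_gen (negbTE j'i).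
  rewrite (bigD1 j) //= coord_gen eqxx big1 ?addr0 // => j' /andP [_ j'j].
  by rewrite coord_gen (negbTE j'j).
have lgj_neq0 j : (dotv l (g j) != 0) = (j != i) by rewrite l_gen pnatr_eq0 eqb0 negbK.
have ray_eq : ray (g i) = (fun x => C x /\ dotv l x = 0).
  rewrite ray_gen_coords; apply: functional_extensionality => x.
  apply: propositional_extensionality; rewrite (supported_face_coords x l_ge0).
  by split=> -[Cx fx]; split=> // j; [rewrite lgj_neq0 | rewrite -lgj_neq0]; apply: fx.
(* [l = 0] only when [k = 1], and then the ray is all of [C]. *)
have [l0|l_neq0] := eqVneq l 0.
  left; rewrite ray_eq l0; apply: functional_extensionality => x.
  by apply: propositional_extensionality; rewrite dotv0; split=> [[]|].
right; exists l, 0; do 3!split=> //.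
by exists 0; rewrite dotvr0.
Qed.

Lemma face_half_line_ray F : face C F -> half_line F -> exists i, F = ray (g i).
Proof.
move=> /face_supported [l l_ge0 ->] hlF.
have F_gen i : dotv l (g i) = 0 -> C (g i) /\ dotv l (g i) = 0 by [].
have [i lgi0] : exists i, dotv l (g i) = 0.
  case: (pickP (fun i => dotv l (g i) == 0)) => [i /eqP|none]; first by exists i.
  have [y [Cy ly] y_neq0] := half_line_neq0 hlF.
  case/negP: y_neq0; have [_ fy0] := (supported_face_coords y l_ge0).1 (conj Cy ly).
  by rewrite (C_decomp Cy) big1 // => j _; rewrite fy0 ?scale0r // (negbT (none j)).
have [v _ collinear] := half_line_collinear hlF (conj C0 (dotvr0 l)).
(* two generators on the half-line would be proportional, against biorthogonality *)
have lgj_neq0 j : (dotv l (g j) != 0) = (j != i).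
  apply/idP/idP => [|ji]; first by apply: contra_neq => ->.
  apply/eqP => lgj0.
  have [si gi] := collinear _ (F_gen i lgi0); have [sj gj] := collinear _ (F_gen j lgj0).
  have := coord_gen i i; rewrite {1}gi dotvZ eqxx => fi_gi.
  have := coord_gen i j; rewrite gj dotvZ [i == j]eq_sym (negbTE ji) => /eqP.
  rewrite mulf_eq0 => /orP [/eqP sj0|/eqP fiv0].
  - by move: (gen_neq0 j); rewrite gj sj0 scale0r eqxx.
  - by move: fi_gi; rewrite fiv0 mulr0 => /eqP; rewrite eq_sym oner_eq0.
exists i; rewrite ray_gen_coords; apply: functional_extensionality => x.
apply: propositional_extensionality; rewrite (supported_face_coords x l_ge0).
by split=> -[Cx fx]; split=> // j; [rewrite -lgj_neq0 | rewrite lgj_neq0]; apply: fx.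
Qed.

Lemma eq_gen_of_coords01 w : C w -> w != 0 ->
  (forall i, dotv (f i) w = 0 \/ dotv (f i) w = 1) -> \sum_i dotv (f i) w <= 1 ->
  exists i, w = g i.
Proof.
move=> Cw w_neq0 coord01 sum_le1.
have [i fiw1] : exists i, dotv (f i) w = 1.
  case: (pickP (fun i => dotv (f i) w == 1)) => [i /eqP|none]; first by exists i.
  case/negP: w_neq0; rewrite (C_decomp Cw) big1 // => j _.
  by case: (coord01 j) => fjw; rewrite fjw ?scale0r //; move: (none j); rewrite /= fjw eqxx.
exists i; rewrite (C_decomp Cw) (bigD1 i) //= fiw1 scale1r big1 ?addr0 // => j ji.
case: (coord01 j) => [-> | fjw1]; first by rewrite scale0r.
have rest_ge0 : 0 <= \sum_(h | (h != i) && (h != j)) dotv (f h) w.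
  by apply: sumr_ge0 => h _; case: (coord01 h) => ->; rewrite ?ler01.
exfalso; move: sum_le1; rewrite (bigD1 i) //= (bigD1 j) //= fiw1 fjw1; lra.
Qed.

End SimplicialCone.

Lemma ord_cut_inj n c c' : (c <= n)%N -> (c' <= n)%N ->
  (forall i : 'I_n, (i < c)%N = (i < c')%N) -> c = c'.
Proof.
move=> le_cn le_c'n cut_eq; apply/eqP; rewrite eqn_leq.
apply/andP; split; rewrite leqNgt; apply/negP => lt_c.
- by have := cut_eq (Ordinal (leq_trans lt_c le_cn)); rewrite /= ltnn lt_c.
- by have := cut_eq (Ordinal (leq_trans lt_c le_c'n)); rewrite /= ltnn lt_c.
Qed.

Section RayGenerators.
Variables (R : realFieldType) (n : nat).

Lemma vab_entry a b (i : 'I_n) :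
  vab R n a b 0 i = 0 \/ vab R n a b 0 i = 1 \/ vab R n a b 0 i = -1.
Proof. by rewrite mxE; case: ifP => _; [|case: ifP => _]; auto. Qed.

Lemma vab_eq1 a b (i : 'I_n) : (a + b <= n)%N -> (vab R n a b 0 i == 1) = (i < a)%N.
Proof.
move=> ab; rewrite mxE; case: ifP => _; first by rewrite eqxx.
by case: ifP => _; apply/negbTE/eqP; lra.
Qed.

Lemma vab_eqN1 a b (i : 'I_n) : (a + b <= n)%N -> (vab R n a b 0 i == -1) = (n - b <= i)%N.
Proof.
move=> ab; rewrite mxE; case: ifP => [lt_ia|_].
  by rewrite (_ : (n - b <= i)%N = false); [apply/negbTE/eqP; lra | lia].
by case: ifP => _; [rewrite eqxx | apply/negbTE/eqP; lra].
Qed.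

Lemma vab_unit_entry a b : (1 <= a + b <= n)%N ->
  exists i : 'I_n, vab R n a b 0 i = 1 \/ vab R n a b 0 i = -1.
Proof.
move=> ab; have [a0|a_gt0] := posnP a.
  have lt_n1 : (n.-1 < n)%N by lia.
  exists (Ordinal lt_n1); right; apply/eqP; rewrite vab_eqN1 /=; lia.
have lt_0n : (0 < n)%N by lia.
by exists (Ordinal lt_0n); left; apply/eqP; rewrite vab_eq1 /=; lia.
Qed.

Lemma vab_neq0 a b : (1 <= a + b <= n)%N -> vab R n a b != 0.
Proof.
move=> /vab_unit_entry [i vi]; apply/eqP => v0.
by move: vi; rewrite v0 mxE; clear v0; case=> ?; lra.
Qed.

Lemma vab_ray_inj a b a' b' : (1 <= a + b <= n)%N -> (1 <= a' + b' <= n)%N ->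
  ray (vab R n a b) = ray (vab R n a' b') -> (a, b) = (a', b').
Proof.
move=> ab a'b' ray_eq.
have [t [t_ge0 v_eq]] : ray (vab R n a' b') (vab R n a b) by rewrite -ray_eq; exact: ray_self.
have t1 : t = 1.
  have [i vi] := vab_unit_entry ab; move: vi; rewrite v_eq mxE.
  by case: (vab_entry a' b' i) => [->|[->|->]]; rewrite ?mulr0 ?mulr1 ?mulrN1; lra.
move: v_eq; rewrite t1 scale1r => v_eq.
have a_eq : a = a'.
  apply: (@ord_cut_inj n); try lia.
  by move=> i; rewrite -(vab_eq1 (b := b)) ?v_eq ?vab_eq1 //; lia.
have b_eq : (n - b = n - b')%N.
  apply: (@ord_cut_inj n); try lia.
  by move=> i; rewrite !ltnNge -(vab_eqN1 (a := a)) ?v_eq ?vab_eqN1 //; lia.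
by congr pair; lia.
Qed.

End RayGenerators.

Section Chamber.
Variables (R : realFieldType) (n : nat) (S : {set 'I_n}).
Implicit Types (x : pt R n) (m : nat).

Lemma Cset0 : Cset S (0 : pt R n).
Proof. by split=> i j _; rewrite ?mxE ?addr0 //; case: ifP. Qed.

Lemma Cset_scale t x : 0 <= t -> Cset S x -> Cset S (t *: x).
Proof.
move=> t_ge0 [Wx Cx]; split=> i j le_ij; rewrite !mxE; first by rewrite ler_wpM2l ?Wx.
by have := Cx i j le_ij; rewrite -mulrDr; case: ifP => _; [apply: mulr_ge0 | apply: mulr_ge0_le0].
Qed.

Lemma ray_sub_Cset v x : Cset S v -> ray v x -> Cset S x.
Proof. by move=> Cv [t [t_ge0 ->]]; exact: Cset_scale. Qed.

Lemma Cset_jump_row_ge0 x m (i j : 'I_n) : Cset S x -> (m < n)%N -> jumpS S m ->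
  i = piS S m :> nat -> (i <= j < i + (n - m))%N -> 0 <= x 0 i + x 0 j.
Proof.
move=> [_ Cx] lt_mn jm i_eq /andP [le_ij lt_j].
have [lt_S nth_eq] := nth_Sdesc_card_ge jm.
have card_eq : card_ge S (n - m.+1).+1 = piS S m by rewrite piS_card_ge -subSn.
have := Cx i j le_ij; rewrite i_eq -card_eq lt_S nth_eq /=.
by rewrite ifT // card_eq -i_eq; lia.
Qed.

Lemma Cset_jump_row_le0 x m (i j : 'I_n) : Cset S x -> (m < n)%N -> jumpS S m ->
  i = piS S m :> nat -> (i + (n - m) <= j)%N -> x 0 i + x 0 j <= 0.
Proof.
move=> [_ Cx] lt_mn jm i_eq le_j.
have [lt_S nth_eq] := nth_Sdesc_card_ge jm.
have card_eq : card_ge S (n - m.+1).+1 = piS S m by rewrite piS_card_ge -subSn.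
have := Cx i j (leq_trans (leq_addr _ _) le_j); rewrite i_eq -card_eq lt_S nth_eq /=.
by rewrite ifF // card_eq -i_eq; apply/negbTE; rewrite -leqNgt; lia.
Qed.

Lemma Cset_tail_le0 x (i j : 'I_n) : Cset S x -> (#|S| <= i <= j)%N ->
  x 0 i + x 0 j <= 0.
Proof.
by move=> [_ Cx] /andP [le_Si le_ij]; have := Cx i j le_ij; rewrite ltnNge le_Si.
Qed.

Definition gS m : pt R n := vab R n (piS S m.+1) (m.+1 - piS S m.+1).

Lemma gS_entry m (i : 'I_n) : (m < n)%N -> gS m 0 i =
  if (i < piS S m.+1)%N then 1 else if (n - m.+1 + piS S m.+1 <= i)%N then -1 else 0.
Proof.
move=> lt_mn; have le_pi := piS_le S m.+1.
by rewrite mxE (_ : n - (m.+1 - piS S m.+1) = n - m.+1 + piS S m.+1)%N //; lia.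
Qed.

Lemma gS_in_Cset m : (m < n)%N -> Cset S (gS m).
Proof.
move=> lt_mn; have pi_card := piS_card_ge S m.+1.
have le_pi := piS_le S m.+1; have le_piS := piS_le_card S m.+1.
split=> i j le_ij; rewrite !gS_entry //.
  by repeat case: ifP => ?; try lra; exfalso; lia.
case: (ltnP i #|S|) => /= [lt_iS|le_Si]; last first.
  have le_pi_i := leq_trans le_piS le_Si.
  by repeat case: ifP => ?; try lra; exfalso; lia.
have [c [cS -> card_c]] := nth_Sdesc lt_iS; rewrite -card_c.
have card_cS : card_ge S c = (card_ge S c.+1).+1 by rewrite card_geS cS.
have ge_c := @card_ge_antimono _ S (n - m.+1) c.
have ge_c1 := @card_ge_antimono _ S c.+1 (n - m.+1).
have lip_c := @card_ge_lipschitz _ S (n - m.+1) c.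
have lip_c1 := @card_ge_lipschitz _ S c.+1 (n - m.+1).
by repeat case: ifP => ?; try lra; exfalso; lia.
Qed.

Definition unitv (j : nat) : pt R n := \row_(i < n) (i == j :> nat)%:R.

Lemma dotv_unitv (j : 'I_n) x : dotv (unitv j) x = x 0 j.
Proof.
rewrite /dotv (bigD1 j) //= big1 ?addr0 => [|i ij]; first by rewrite mxE eqxx mul1r.
by rewrite mxE (inj_eq val_inj) (negbTE ij) mul0r.
Qed.

(* Up to sign, [yS m] is the coordinate that is 0 in [gS k] for [k < m] and 1 or -1
   for [k >= m]; the sign conditions of [C(S)] make it nonincreasing in [m]. *)
Definition yS m : pt R n :=
  if (m < n)%N then (if jumpS S m then unitv (piS S m) else - unitv (n - m.+1 + piS S m))
  else 0.

Definition fS m : pt R n := yS m - yS m.+1.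

Lemma dotv_yS_ge m x : (n <= m)%N -> dotv (yS m) x = 0.
Proof. by move=> le_nm; rewrite /yS ltnNge le_nm dotv0. Qed.

Lemma dotv_yS_jump m (i : 'I_n) x : (m < n)%N -> jumpS S m ->
  i = piS S m :> nat -> dotv (yS m) x = x 0 i.
Proof. by move=> lt_mn jm i_eq; rewrite /yS lt_mn jm -i_eq dotv_unitv. Qed.

Lemma dotv_yS_nojump m (i : 'I_n) x : (m < n)%N -> ~~ jumpS S m ->
  i = (n - m.+1 + piS S m)%N :> nat -> dotv (yS m) x = - x 0 i.
Proof. by move=> lt_mn jm i_eq; rewrite /yS lt_mn (negbTE jm) -i_eq dotvN dotv_unitv. Qed.

Lemma yS_antitone x m : Cset S x -> (m < n)%N -> dotv (yS m.+1) x <= dotv (yS m) x.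
Proof.
move=> Cx lt_mn; have Wx := Cx.1.
have pi_succ := piS_succ S lt_mn; have le_pi := piS_le S m.
have lt_drop := drop_idx_lt S lt_mn.
case: (ltnP m.+1 n) => [lt_m1n|le_nm1]; last first.
  rewrite dotv_yS_ge //; case Jm: (jumpS S m).
  - set i := Ordinal (jump_idx_lt lt_mn Jm); rewrite (dotv_yS_jump x (m := m) (i := i)) //.
    suff : 0 <= x 0 i + x 0 i by lra.
    by apply: (Cset_jump_row_ge0 Cx lt_mn Jm) => /=; lia.
  - set i := Ordinal lt_drop; rewrite (dotv_yS_nojump x (m := m) (i := i)) ?Jm //.
    suff : x 0 i + x 0 i <= 0 by lra.
    have m1n : m.+1 = n by lia.
    have := piS_n S; rewrite -{2}m1n pi_succ Jm add0n => pi_card.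
    by apply: (Cset_tail_le0 Cx) => /=; rewrite -pi_card; lia.
have pi_succ1 := piS_succ S lt_m1n; have lt_drop1 := drop_idx_lt S lt_m1n.
case Jm: (jumpS S m); case Jm1: (jumpS S m.+1).
- set i := Ordinal (jump_idx_lt lt_mn Jm); set j := Ordinal (jump_idx_lt lt_m1n Jm1).
  rewrite (dotv_yS_jump x (m := m) (i := i)) // (dotv_yS_jump x (m := m.+1) (i := j)) //.
  by apply: Wx => /=; lia.
- set i := Ordinal (jump_idx_lt lt_mn Jm); set j := Ordinal lt_drop1.
  rewrite (dotv_yS_jump x (m := m) (i := i)) // (dotv_yS_nojump x (m := m.+1) (i := j)) ?Jm1 //.
  suff : 0 <= x 0 i + x 0 j by lra.
  by apply: (Cset_jump_row_ge0 Cx lt_mn Jm) => /=; lia.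
- set i := Ordinal lt_drop; set j := Ordinal (jump_idx_lt lt_m1n Jm1).
  rewrite (dotv_yS_nojump x (m := m) (i := i)) ?Jm // (dotv_yS_jump x (m := m.+1) (i := j)) //.
  suff : x 0 j + x 0 i <= 0 by lra.
  by apply: (Cset_jump_row_le0 Cx lt_m1n Jm1) => /=; lia.
- set i := Ordinal lt_drop; set j := Ordinal lt_drop1.
  rewrite (dotv_yS_nojump x (m := m) (i := i)) ?Jm // (dotv_yS_nojump x (m := m.+1) (i := j)) ?Jm1 //.
  by rewrite lerN2; apply: Wx => /=; lia.
Qed.

Lemma yS_ge0 x m : Cset S x -> 0 <= dotv (yS m) x.
Proof.
move=> Cx; have [k lt_k] := ubnP (n - m); elim: k m lt_k => // k IH m lt_k.
have [lt_mn|le_nm] := ltnP m n; last by rewrite dotv_yS_ge.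
by apply: le_trans (yS_antitone Cx lt_mn); apply: IH; lia.
Qed.

Lemma dotv_yS_gS m m' : (m' < n)%N -> dotv (yS m) (gS m') = (m <= m')%N%:R.
Proof.
move=> lt_m'n; have [lt_mn|le_nm] := ltnP m n; last first.
  by rewrite dotv_yS_ge // leqNgt (leq_trans lt_m'n le_nm).
have pi_succ := piS_succ S lt_mn.
have mono_le : (m <= m')%N -> (piS S m.+1 <= piS S m'.+1)%N by move=> ?; apply: piS_mono.
have lip_le : (m <= m')%N -> (piS S m'.+1 <= piS S m.+1 + (m'.+1 - m.+1))%N.
  by move=> ?; apply: piS_lipschitz.
have mono_gt : (m'.+1 <= m)%N -> (piS S m'.+1 <= piS S m)%N by apply: piS_mono.
have lip_gt : (m'.+1 <= m)%N -> (piS S m <= piS S m'.+1 + (m - m'.+1))%N.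
  by apply: piS_lipschitz.
have lip_n : (piS S n <= piS S m'.+1 + (n - m'.+1))%N by apply: piS_lipschitz.
have pi_n := piS_n S; have pi_S := piS_le_card S m.+1.
have le_pi := piS_le S m; have le_pi' := piS_le S m'.+1.
case Jm: (jumpS S m); rewrite Jm in pi_succ.
- rewrite (dotv_yS_jump _ (m := m) (i := Ordinal (jump_idx_lt lt_mn Jm))) //.
  rewrite gS_entry //=.
  by case: (leqP m m') => /= ?; repeat case: ifP => ?; try lra; exfalso; lia.
- rewrite (dotv_yS_nojump _ (m := m) (i := Ordinal (drop_idx_lt S lt_mn))) ?Jm //.
  rewrite gS_entry //=.
  by case: (leqP m m') => /= ?; repeat case: ifP => ?; try lra; exfalso; lia.
Qed.

Lemma dotv_fS_gS m m' : (m' < n)%N -> dotv (fS m) (gS m') = (m == m')%N%:R.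
Proof.
move=> lt_m'n; rewrite dotvB !dotv_yS_gS //.
by case: (ltngtP m m') => /= _; rewrite ?subrr ?subr0.
Qed.

Lemma Cset_gS (i : 'I_n) : Cset S (gS i).
Proof. exact: gS_in_Cset. Qed.

Lemma Cset_fS_ge0 (i : 'I_n) x : Cset S x -> 0 <= dotv (fS i) x.
Proof. by move=> Cx; rewrite dotvB subr_ge0 yS_antitone. Qed.

Lemma fS_gS (i j : 'I_n) : dotv (fS i) (gS j) = (i == j)%:R.
Proof. exact: dotv_fS_gS. Qed.

Lemma Cset_decomp x : Cset S x -> x = \sum_(i < n) dotv (fS i) x *: gS i.
Proof. by move=> _; apply: biorthogonal_decomp fS_gS x. Qed.

Lemma Cset_face_half_line F : face (Cset S) F -> half_line F ->
  exists2 m, (m < n)%N & F = ray (gS m).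
Proof.
move=> faceF hlF; have [i ->] := face_half_line_ray Cset0 Cset_scale
  Cset_gS Cset_fS_ge0 fS_gS Cset_decomp faceF hlF.
by exists i.
Qed.

Lemma gS_extreme m : (m < n)%N -> extreme_ray (ray (gS m)).
Proof.
move=> lt_mn; split; last exact/ray_half_line/(gen_neq0 fS_gS (Ordinal lt_mn)).
exists (Cset S); split; first by exists S.
exact: (face_ray_gen Cset0 Cset_scale Cset_gS Cset_fS_ge0 fS_gS Cset_decomp
  (Ordinal lt_mn)).
Qed.

Lemma Cset_vab_eq_gS a b : (1 <= a + b <= n)%N ->
  Cset S (vab R n a b) -> exists2 m, (m < n)%N & vab R n a b = gS m.
Proof.
move=> ab Cw; set w := vab R n a b in Cw *.
have yS01 m : dotv (yS m) w = 0 \/ dotv (yS m) w = 1.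
  have [lt_mn|le_nm] := ltnP m n; last by rewrite dotv_yS_ge //; left.
  have := yS_ge0 m Cw; case Jm: (jumpS S m).
  - rewrite (dotv_yS_jump _ (m := m) (i := Ordinal (jump_idx_lt lt_mn Jm))) //.
    by case: (vab_entry R a b (Ordinal (jump_idx_lt lt_mn Jm))) => [->|[->|->]] ?; auto; lra.
  - rewrite (dotv_yS_nojump _ (m := m) (i := Ordinal (drop_idx_lt S lt_mn))) ?Jm //.
    case: (vab_entry R a b (Ordinal (drop_idx_lt S lt_mn))) => [->|[->|->]] ?;
      rewrite ?oppr0 ?opprK; auto; lra.
have fS01 (i : 'I_n) : dotv (fS i) w = 0 \/ dotv (fS i) w = 1.
  have := yS_antitone Cw (ltn_ord i); rewrite dotvB.
  by case: (yS01 i) => ->; case: (yS01 i.+1) => -> ?; rewrite ?subrr ?subr0; auto; lra.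
have sum_le1 : \sum_(i < n) dotv (fS i) w <= 1.
  rewrite -(big_mkord xpredT (fun m => dotv (fS m) w)).
  rewrite (telescope_sumr_eq (fun m => - dotv (yS m) w)) // => [|m _]; last first.
    by rewrite dotvB opprK addrC.
  by rewrite dotv_yS_ge // oppr0 sub0r opprK; case: (yS01 0) => ->; lra.
have [i ->] := eq_gen_of_coords01 Cset_decomp Cw (vab_neq0 R ab) fS01 sum_le1.
by exists i.
Qed.

End Chamber.

Lemma vab_eq_gS_interval (R : realFieldType) n a b : (1 <= a + b <= n)%N ->
  vab R n a b = gS R [set s : 'I_n | (n - a <= s)%N] (a + b).-1.
Proof.
move=> ab; rewrite /gS prednK; last by lia.
by rewrite piS_interval ?addKn //; lia.
Qed.

Lemma extreme_ray_Cset (R : realFieldType) n (F : ptset R n) : extreme_ray F ->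
  exists S m, (m < n)%N /\ F = ray (gS R S m).
Proof.
move=> [[_ [[S ->] faceF]] hlF].
by have [m lt_mn ->] := Cset_face_half_line faceF hlF; exists S, m.
Qed.

Theorem theorem1p21 (R : realFieldType) (n : nat) :
  (* (a) (a,b) |-> R_{>=0} v(a,b) is a bijection from E*_n onto the extreme rays *)
  ((forall a b : nat, (1 <= a + b <= n)%N -> extreme_ray (ray (vab R n a b))) /\
   (forall a b a' b' : nat, (1 <= a + b <= n)%N -> (1 <= a' + b' <= n)%N ->
      ray (vab R n a b) = ray (vab R n a' b') -> (a, b) = (a', b')) /\
   (forall F : ptset R n, extreme_ray F ->
      exists a b : nat, (1 <= a + b <= n)%N /\ F = ray (vab R n a b))) /\
  (* (b) extreme rays lying in C(S) *)
  (forall (S : {set 'I_n}) (F : ptset R n),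
     (extreme_ray F /\ (forall x, F x -> Cset S x)) <->
     (exists l : nat, (1 <= l <= n)%N /\
        F = ray (vab R n (piS S l) (l - piS S l)))).
Proof.
have gS_range (S : {set 'I_n}) m : (m < n)%N -> (1 <= piS S m.+1 + (m.+1 - piS S m.+1) <= n)%N.
  by have := piS_le S m.+1; lia.
have extreme_vab F : extreme_ray F ->
    exists a b, (1 <= a + b <= n)%N /\ F = ray (vab R n a b).
  move=> /extreme_ray_Cset [S [m [lt_mn ->]]].
  by exists (piS S m.+1), (m.+1 - piS S m.+1)%N; split; last by []; exact: gS_range.
split; first split.
- move=> a b ab; rewrite (vab_eq_gS_interval R ab); apply: gS_extreme; lia.
- by split; [exact: vab_ray_inj | exact: extreme_vab].
move=> S F; split.
- case=> /extreme_vab [a [b [ab ->]]] sub_S.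
  have [m lt_mn ->] := Cset_vab_eq_gS ab (sub_S _ (ray_self _)).
  by exists m.+1.
- case=> l [l_range ->]; have lt_ln : (l.-1 < n)%N by lia.
  have gS_l : gS R S l.-1 = vab R n (piS S l) (l - piS S l) by rewrite /gS prednK //; lia.
  rewrite -gS_l; split; first exact: gS_extreme.
  by move=> x; apply: ray_sub_Cset; exact: gS_in_Cset.
Qed.
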